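(* Let $A$ be a real symmetric $n\times n$ matrix with $A\mathbf{1}_n=\rho_A\mathbf{1}_n$ for some $\rho_A>0$, and let $B$ be a real symmetric $m\times m$ matrix with $B\mathbf{1}_m=\rho_B\mathbf{1}_m$ for some $\rho_B>0$. Then (a) $n_-(A\diamond B)=n_-(A)+n_-(B)$, (b) $n_+(A\diamond B)=n_+(A)+n_+(B)-1$, and (c) $n_0(A\diamond B)=nm-n-m+1+n_0(A)+n_0(B)$.
   Context: $\mathbf{1}_k$ is the all-ones column vector of length $k$ and $J_k$ the $k\times k$ all-ones matrix. For an $n\times n$ matrix $A=(a_{ij})$ and an $m\times m$ matrix $B$, $A\diamond B=A\otimes J_m+J_n\otimes B$ is the $nm\times nm$ block matrix whose $(i,j)$ block is $a_{ij}J_m+B$. For a real symmetric matrix $M$, $n_+(M)$, $n_-(M)$, $n_0(M)$ denote the numbers of positive, negative, and zero eigenvalues of $M$, counted with multiplicity. *)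

From HB Require Import structures.
From mathcomp Require Import all_boot all_order all_algebra.
From mathcomp Require Import polyorder polyrcf mxtens.
From mathcomp Require Import reals.
Set Implicit Arguments. Unset Strict Implicit. Unset Printing Implicit Defensive.
Import Order.TTheory GRing.Theory Num.Theory.
Local Open Scope ring_scope.

Definition Jmx (R : realType) (k : nat) : 'M[R]_k := const_mx 1.
Definition ones (R : realType) (k : nat) : 'cV[R]_k := const_mx 1.

Definition diamond (R : realType) (n m : nat) (A : 'M[R]_n) (B : 'M[R]_m)
  : 'M[R]_(n * m) := A *t Jmx R m + Jmx R n *t B.

Definition n_pos (R : realType) (k : nat) (M : 'M[R]_k) : nat :=
  \sum_(x <- rootsR (char_poly M) | 0 < x) \mu_x (char_poly M).
Definition n_neg (R : realType) (k : nat) (M : 'M[R]_k) : nat :=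
  \sum_(x <- rootsR (char_poly M) | x < 0) \mu_x (char_poly M).
Definition n_zero (R : realType) (k : nat) (M : 'M[R]_k) : nat :=
  \sum_(x <- rootsR (char_poly M) | x == 0) \mu_x (char_poly M).

From HB Require Import structures.
From mathcomp Require Import all_boot all_order all_algebra.
From mathcomp Require Import polyorder polyrcf mxtens.
From mathcomp Require Import reals.
From mathcomp Require Import zify ring.
Set Implicit Arguments. Unset Strict Implicit. Unset Printing Implicit Defensive.
Import Order.TTheory GRing.Theory Num.Theory.
Local Open Scope ring_scope.

(** Split off the eigenvector [1]: [A = A0 + (rhoA / n) J] with [A0 J = 0], and
    likewise for [B]; then
      [A <> B = A0 (x) J + J (x) B0 + (rhoA / n + rhoB / m) J],
    each partial sum being annihilated on the right by the next summand.
    When [M N = 0], [('X - M) ('X - N) = 'X ('X - (M + N))], so characteristic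
    polynomials multiply up to powers of ['X].  Together with Sylvester's identity
    ['X^k chi(U V) = 'X^N chi(V U)] this shows that, up to the eigenvalue [0],
    [A <> B] has the eigenvalues of [m A0], [n B0] and [m rhoA + n rhoB], while [A]
    has those of [A0] with one [0] replaced by [rhoA].  Counting roots of a fixed
    sign, which positive scaling preserves, gives the three formulas as
    [rhoA, rhoB > 0]. *)

Lemma mul_const_mx (R : pzSemiRingType) p k q (a b : R) :
  (const_mx a : 'M_(p, k)) *m (const_mx b : 'M_(k, q)) = const_mx (a * b *+ k).
Proof.
apply/matrixP => i j; rewrite !mxE; under eq_bigr do rewrite !mxE.
by rewrite sumr_const card_ord.
Qed.

Lemma tens_const_mx (R : pzRingType) m n p q (a b : R) :
  (const_mx a : 'M_(m, n)) *t (const_mx b : 'M_(p, q)) = const_mx (a * b).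
Proof. by apply/matrixP => i j; rewrite !mxE. Qed.

Section CharPoly.
Variable R : comNzRingType.

Lemma char_poly_castmx k1 k2 (e1 e2 : k1 = k2) (M : 'M[R]_k1) :
  char_poly (castmx (e1, e2) M) = char_poly M.
Proof. by rewrite (eq_irrelevance e2 e1); case: k2 / e1 {e2}; rewrite castmx_id. Qed.

Lemma char_poly_const_mx11 (a : R) : char_poly (const_mx a : 'M_1) = 'X - a%:P.
Proof. by rewrite /char_poly det_mx11 !mxE /= mulr1n. Qed.

Lemma char_poly_scale k (c : R) (M : 'M[R]_k) :
  char_poly (c *: M) \Po (c *: 'X) = c ^+ k *: char_poly M.
Proof.
rewrite /char_poly -det_map_mx.
have -> : map_mx (comp_poly (c *: 'X)) (char_poly_mx (c *: M)) = c%:P *: char_poly_mx M.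
  apply/matrixP => i j; rewrite !mxE comp_polyB comp_polyC polyCM mulrBr.
  by case: (i == j); rewrite ?comp_poly0 ?mulr0 ?comp_polyX ?mul_polyC.
by rewrite detZ -rmorphXn mul_polyC.
Qed.

Lemma char_poly_mulmxC N k (U : 'M[R]_(N, k)) (V : 'M[R]_(k, N)) :
  'X^k * char_poly (U *m V) = 'X^N * char_poly (V *m U).
Proof.
rewrite /char_poly /char_poly_mx !map_mxM.
set U' := map_mx polyC U; set V' := map_mx polyC V.
set T := block_mx ('X%:M : 'M_N) U' V' (1%:M : 'M_k).
have T_lu : T = block_mx 1%:M U' 0 1%:M *m block_mx ('X%:M - U' *m V') 0 V' 1%:M.
  by rewrite /T mulmx_block !mul1mx !mulmx0 !mul0mx !mulmx1 !add0r subrK.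
have T_ul : block_mx 1%:M 0 (- V') ('X%:M : 'M_k) *m T
          = block_mx ('X%:M) U' 0 ('X%:M - V' *m U').
  rewrite /T mulmx_block !mul1mx !mul0mx !addr0 !mulmx1 mul_mx_scalar mul_scalar_mx.
  by rewrite scalerN addNr mulNmx addrC.
have := congr1 determinant T_ul; rewrite det_mulmx T_lu det_mulmx det_ublock det_lblock.
rewrite det_lblock det_ublock !det1 !det_scalar !mul1r mulr1 => ->.
by rewrite mulrC.
Qed.

Lemma char_poly_add_mul0 k (M N : 'M[R]_k) : M *m N = 0 ->
  'X^k * char_poly (M + N) = char_poly M * char_poly N.
Proof.
move=> MN0; rewrite /char_poly -det_scalar -!det_mulmx; congr determinant.
rewrite /char_poly_mx map_mxD !mulmxBl !mulmxBr -map_mxM MN0 map_mx0 subr0.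
by rewrite mulmxDr !mul_scalar_mx mul_mx_scalar opprD addrA [LHS]addrAC.
Qed.

Lemma char_poly_const_mx k (c : R) :
  'X * char_poly (const_mx c : 'M_k) = 'X^k * ('X - (c *+ k)%:P).
Proof.
have := char_poly_mulmxC (const_mx c : 'M_(k, 1)) (const_mx 1 : 'M_(1, k)).
by rewrite !mul_const_mx mulr1 mul1r mulr1n char_poly_const_mx11 expr1.
Qed.

Lemma char_poly_tens_const n m (M : 'M[R]_n) :
  'X^n * char_poly (M *t (const_mx 1 : 'M_m)) = 'X^(n * m) * char_poly (m%:R *: M).
Proof.
have := char_poly_mulmxC (M *t (const_mx 1 : 'cV_m)) (1%:M *t (const_mx 1 : 'rV_m)).
rewrite !tensmx_mul mulmx1 mul1mx !mul_const_mx mulr1 mulr1n.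
by rewrite [const_mx (1 *+ m)]mx11_scalar mxE tens_mx_scalar char_poly_castmx muln1.
Qed.

Lemma char_poly_const_tens n m (M : 'M[R]_m) :
  'X^m * char_poly ((const_mx 1 : 'M_n) *t M) = 'X^(n * m) * char_poly (n%:R *: M).
Proof.
have := char_poly_mulmxC ((const_mx 1 : 'cV_n) *t M) ((const_mx 1 : 'rV_n) *t 1%:M).
rewrite !tensmx_mul mulmx1 mul1mx !mul_const_mx mulr1 mulr1n.
by rewrite [const_mx (1 *+ n)]mx11_scalar mxE tens_scalar_mx char_poly_castmx mul1n.
Qed.

End CharPoly.

Definition deflate (R : fieldType) k (rho : R) (M : 'M[R]_k) : 'M_k :=
  M - const_mx (rho / k%:R).

Section Deflation.
Variables (R : fieldType) (k : nat) (M : 'M[R]_k) (rho : R).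
Hypotheses (k_neq0 : k%:R != 0 :> R)
           (M_ones : M *m const_mx 1 = rho *: (const_mx 1 : 'cV_k)).

Lemma mulmx_const_eigen q (c : R) : M *m (const_mx c : 'M_(k, q)) = const_mx (rho * c).
Proof.
have -> : const_mx c = (const_mx 1 : 'cV_k) *m (const_mx c : 'M_(1, q)).
  by rewrite mul_const_mx mul1r.
by rewrite mulmxA M_ones -scalemxAl mul_const_mx mul1r mulr1n scalemx_const.
Qed.

Lemma deflate_mul_const q (c : R) : deflate rho M *m (const_mx c : 'M_(k, q)) = 0.
Proof.
rewrite mulmxBl mulmx_const_eigen mul_const_mx -mulr_natr mulrAC divfK //.
by rewrite subrr.
Qed.

Lemma char_poly_deflate : 'X * char_poly M = char_poly (deflate rho M) * ('X - rho%:P).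
Proof.
have := char_poly_add_mul0 (@deflate_mul_const k (rho / k%:R)).
rewrite subrK => split_char.
apply: (@mulfI _ ('X^k)); first by rewrite expf_neq0 ?polyX_eq0.
have rho_k : rho / k%:R *+ k = rho by rewrite -mulr_natr divfK.
by rewrite mulrCA split_char mulrCA char_poly_const_mx rho_k mulrCA.
Qed.

End Deflation.

Section RootCount.
Variables (R : rcfType) (P : pred R).
Implicit Types p q : {poly R}.

Definition nroots p : nat := (\sum_(x <- rootsR p | P x) \mu_x p)%N.

Lemma mem_rootsR p x : p != 0 -> (x \in rootsR p) = root p x.
Proof. by move=> p0; rewrite -(roots_on_rootsR p0 x). Qed.

Lemma nroots_big p s : p != 0 -> uniq s -> (forall x, root p x -> x \in s) ->
  (\sum_(x <- s | P x) \mu_x p)%N = nroots p.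
Proof.
move=> p0 s_uniq rootp_s; rewrite /nroots (bigID (root p)) /=.
rewrite [X in (_ + X)%N]big1 ?addn0; last by move=> x /andP[_ /muNroot].
rewrite -big_filter -[RHS]big_filter; apply: perm_big; apply: uniq_perm.
- by rewrite filter_uniq.
- by rewrite filter_uniq // uniq_roots.
move=> x; rewrite !mem_filter mem_rootsR //.
by case: (boolP (root p x)) => [/rootp_s ->|]; rewrite ?andbT ?andbF.
Qed.

Lemma nrootsM p q : p * q != 0 -> nroots (p * q) = (nroots p + nroots q)%N.
Proof.
move=> pq0; have /andP[p0 q0] : (p != 0) && (q != 0) by rewrite -negb_or -mulf_eq0.
rewrite {1}/nroots; under eq_bigr => x _ do rewrite mu_mul //.
rewrite big_split /=; congr addn; apply: nroots_big; rewrite ?uniq_roots // => x;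
  by rewrite mem_rootsR // rootM => ->; rewrite ?orbT.
Qed.

Lemma nroots_mul_eq p1 p2 q1 q2 : p1 \is monic -> p2 \is monic ->
  p1 * p2 = q1 * q2 -> (nroots p1 + nroots p2 = nroots q1 + nroots q2)%N.
Proof.
move=> p1_monic p2_monic pq; have pq0 : p1 * p2 != 0 by rewrite monic_neq0 ?monicMl.
by rewrite -!nrootsM -?pq.
Qed.

Lemma nroots_XsubC a : nroots ('X - a%:P) = P a.
Proof.
rewrite -(@nroots_big _ [:: a]) ?polyXsubC_eq0 //; last first.
  by move=> x; rewrite root_XsubC => /eqP ->; rewrite inE.
by rewrite big_cons big_nil mu_XsubC; case: (P a).
Qed.

Lemma nroots_X : nroots 'X = P 0.
Proof. by rewrite -nroots_XsubC subr0. Qed.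

Lemma nroots_Xn k : nroots 'X^k = (P 0%R * k)%N.
Proof.
rewrite -(@nroots_big _ [:: 0]) ?expf_neq0 ?polyX_eq0 //; last first.
  by move=> x; rewrite rootE hornerXn expf_eq0 => /andP[_ /eqP ->]; rewrite inE.
rewrite big_cons big_nil -['X]subr0 -polyC0 mu_exp mu_XsubC mul1n.
by case: (P 0); rewrite ?addn0 ?mul1n.
Qed.

Lemma nrootsZ c p : c != 0 -> nroots (c *: p) = nroots p.
Proof.
move=> c0; have [->|p0] := eqVneq p 0; first by rewrite scaler0.
have cp0 : c *: p != 0 by rewrite scaler_eq0 negb_or c0.
rewrite -(@nroots_big _ (rootsR p)) ?uniq_roots //; last first.
  by move=> x; rewrite rootZ // mem_rootsR.
by apply: eq_bigr => x _; rewrite mu_mulC.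
Qed.

Lemma mu_comp_scale c p x : c != 0 -> p != 0 ->
  \mu_x (p \Po (c *: 'X)) = \mu_(c * x) p.
Proof.
move=> c0 p0; have [q qNroot p_eq] := mu_spec (c * x) p0.
rewrite {1}p_eq; set k := \mu_(c * x) p.
have XsubC_comp : ('X - (c * x)%:P) \Po (c *: 'X) = c%:P * ('X - x%:P).
  by rewrite comp_polyB comp_polyX comp_polyC mulrBr mul_polyC polyCM.
have qc_Nroot : ~~ root (q \Po (c *: 'X)) x by rewrite root_comp hornerZ hornerX.
have qc0 : q \Po (c *: 'X) != 0 by apply: contraNneq qc_Nroot => ->; rewrite root0.
rewrite comp_polyM rmorphXn /= XsubC_comp exprMn -rmorphXn /= mulrA.
rewrite mu_mul; last by rewrite !mulf_neq0 ?polyC_eq0 ?expf_neq0 ?polyXsubC_eq0.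
rewrite mu_mul; last by rewrite mulf_neq0 ?polyC_eq0 ?expf_neq0.
by rewrite mu_polyC (muNroot qc_Nroot) mu_exp mu_XsubC mul1n.
Qed.

Lemma nroots_add_mul0 k (M N : 'M[R]_k) : M *m N = 0 ->
  (P 0%R * k + nroots (char_poly (M + N)) = nroots (char_poly M) + nroots (char_poly N))%N.
Proof.
move=> MN0; rewrite -nroots_Xn.
exact: nroots_mul_eq (monicXn _ _) (char_poly_monic _) (char_poly_add_mul0 MN0).
Qed.

Lemma nroots_const_mx k (c : R) :
  (P 0%R + nroots (char_poly (const_mx c : 'M_k)) = P 0%R * k + P (c *+ k)%R)%N.
Proof.
rewrite -nroots_Xn -nroots_X -nroots_XsubC.
exact: nroots_mul_eq (monicX _) (char_poly_monic _) (char_poly_const_mx k c).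
Qed.

Lemma nroots_char_poly_deflate k (M : 'M[R]_k) (rho : R) :
  k%:R != 0 :> R -> M *m const_mx 1 = rho *: (const_mx 1 : 'cV_k) ->
  (P 0%R + nroots (char_poly M) = nroots (char_poly (deflate rho M)) + P rho)%N.
Proof.
move=> k_neq0 M_ones; rewrite -nroots_X -nroots_XsubC.
exact: nroots_mul_eq (monicX _) (char_poly_monic _) (char_poly_deflate k_neq0 M_ones).
Qed.

Hypothesis P_scale : forall c x, 0 < c -> P (c * x) = P x.

Lemma nroots_comp_scale c p : 0 < c -> nroots (p \Po (c *: 'X)) = nroots p.
Proof.
move=> c_gt0; have c0 : c != 0 by rewrite gt_eqF.
have [->|p0] := eqVneq p 0; first by rewrite comp_poly0.
have pc0 : p \Po (c *: 'X) != 0.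
  by rewrite comp_poly_eq0 // size_scale // size_polyX.
rewrite -(@nroots_big _ [seq y / c | y <- rootsR p]) //.
- rewrite big_map; apply: eq_big => y; first by rewrite -(P_scale _ c_gt0) mulrC divfK.
  by move=> _; rewrite mu_comp_scale // mulrC divfK.
- by rewrite map_inj_uniq ?uniq_roots // => y z /(mulIf (invr_neq0 c0)).
- move=> x; rewrite root_comp hornerZ hornerX => px.
  by apply/mapP; exists (c * x); rewrite ?mem_rootsR // [c * x]mulrC mulfK.
Qed.

Lemma nroots_char_poly_scale k c (M : 'M[R]_k) : 0 < c ->
  nroots (char_poly (c *: M)) = nroots (char_poly M).
Proof.
move=> c_gt0; rewrite -(nroots_comp_scale _ c_gt0) char_poly_scale.
by rewrite nrootsZ // expf_neq0 // gt_eqF.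
Qed.

Lemma nroots_tens_const n m (M : 'M[R]_n) : (0 < m)%N ->
  (P 0%R * n + nroots (char_poly (M *t (const_mx 1%R : 'M_m)))
   = P 0%R * (n * m) + nroots (char_poly M))%N.
Proof.
move=> m_gt0; rewrite -!nroots_Xn -(@nroots_char_poly_scale _ m%:R M) ?ltr0n //.
exact: nroots_mul_eq (monicXn _ _) (char_poly_monic _) (char_poly_tens_const m M).
Qed.

Lemma nroots_const_tens n m (M : 'M[R]_m) : (0 < n)%N ->
  (P 0%R * m + nroots (char_poly ((const_mx 1%R : 'M_n) *t M))
   = P 0%R * (n * m) + nroots (char_poly M))%N.
Proof.
move=> n_gt0; rewrite -!nroots_Xn -(@nroots_char_poly_scale _ n%:R M) ?ltr0n //.
exact: nroots_mul_eq (monicXn _ _) (char_poly_monic _) (char_poly_const_tens n M).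
Qed.

End RootCount.

Section Diamond.
Variables (R : realType) (n m : nat) (A : 'M[R]_n) (B : 'M[R]_m) (rhoA rhoB : R).
Hypotheses (n_gt0 : (0 < n)%N) (m_gt0 : (0 < m)%N).
Hypotheses (A_ones : A *m ones R n = rhoA *: ones R n)
           (B_ones : B *m ones R m = rhoB *: ones R m).

Let n_neq0 : n%:R != 0 :> R. Proof. by rewrite pnatr_eq0 -lt0n. Qed.
Let m_neq0 : m%:R != 0 :> R. Proof. by rewrite pnatr_eq0 -lt0n. Qed.

Lemma diamond_deflate :
  diamond A B = deflate rhoA A *t Jmx R m + Jmx R n *t deflate rhoB B
                + const_mx (rhoA / n%:R + rhoB / m%:R).
Proof. by apply/matrixP => i j; rewrite !mxE; ring. Qed.

Lemma nroots_diamond (P : pred R) : (forall c x, 0 < c -> P (c * x) = P x) ->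
  (P 0%R * (n + m) + nroots P (char_poly (diamond A B)) + P rhoA + P rhoB
   = P 0%R * (n * m).+1 + nroots P (char_poly A) + nroots P (char_poly B)
     + P (m%:R * rhoA + n%:R * rhoB)%R)%N.
Proof.
move=> P_scale.
set A0 := deflate rhoA A; set B0 := deflate rhoB B; set c := rhoA / n%:R + rhoB / m%:R.
set M1 := A0 *t Jmx R m; set M2 := Jmx R n *t B0; set M3 : 'M_(n * m) := const_mx c.
have A0J a : A0 *m (const_mx a : 'M_n) = 0 by apply: deflate_mul_const.
have B0J b : B0 *m (const_mx b : 'M_m) = 0 by apply: deflate_mul_const.
have M12 : M1 *m M2 = 0 by rewrite tensmx_mul A0J tens0mx.
have M123 : (M1 + M2) *m M3 = 0.
  have -> : M3 = const_mx c *t Jmx R m by rewrite tens_const_mx mulr1.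
  by rewrite mulmxDl !tensmx_mul A0J B0J tens0mx tensmx0 addr0.
have c_nm : c *+ (n * m) = m%:R * rhoA + n%:R * rhoB.
  by rewrite -mulr_natr natrM /c; field; rewrite n_neq0 m_neq0.
(* The counts are restated here so that [lia] sees syntactically equal atoms, not
   ones differing only in canonical instances. *)
have countA : (P 0%R + nroots P (char_poly A) = nroots P (char_poly A0) + P rhoA)%N
  := nroots_char_poly_deflate P n_neq0 A_ones.
have countB : (P 0%R + nroots P (char_poly B) = nroots P (char_poly B0) + P rhoB)%N
  := nroots_char_poly_deflate P m_neq0 B_ones.
have count1 : (P 0%R * n + nroots P (char_poly M1)
               = P 0%R * (n * m) + nroots P (char_poly A0))%N
  := nroots_tens_const P_scale A0 m_gt0.
have count2 : (P 0%R * m + nroots P (char_poly M2)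
               = P 0%R * (n * m) + nroots P (char_poly B0))%N
  := nroots_const_tens P_scale B0 n_gt0.
have count3 : (P 0%R + nroots P (char_poly M3)
               = P 0%R * (n * m) + P (m%:R * rhoA + n%:R * rhoB)%R)%N.
  by rewrite -c_nm; apply: nroots_const_mx.
have count12 : (P 0%R * (n * m) + nroots P (char_poly (M1 + M2))
                = nroots P (char_poly M1) + nroots P (char_poly M2))%N
  := nroots_add_mul0 P M12.
have countD : (P 0%R * (n * m) + nroots P (char_poly (diamond A B))
               = nroots P (char_poly (M1 + M2)) + nroots P (char_poly M3))%N.
  by rewrite diamond_deflate; apply: nroots_add_mul0.
by move: countA countB count1 count2 count3 count12 countD; case: (P 0%R); lia.
Qed.

End Diamond.

Lemma n_negE (R : realType) k (M : 'M[R]_k) :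
  n_neg M = nroots (fun x => x < 0) (char_poly M).
Proof. by []. Qed.

Lemma n_posE (R : realType) k (M : 'M[R]_k) :
  n_pos M = nroots (fun x => 0 < x) (char_poly M).
Proof. by []. Qed.

Lemma n_zeroE (R : realType) k (M : 'M[R]_k) :
  n_zero M = nroots (fun x => x == 0) (char_poly M).
Proof. by []. Qed.

Unset Implicit Arguments.
Theorem theorem6 (R : realType) (n m : nat) (A : 'M[R]_n) (B : 'M[R]_m)
    (rhoA rhoB : R) :
  (0 < n)%N -> (0 < m)%N ->
  A^T = A -> B^T = B ->
  0 < rhoA -> A *m ones R n = rhoA *: ones R n ->
  0 < rhoB -> B *m ones R m = rhoB *: ones R m ->
  [/\ n_neg (diamond A B) = (n_neg A + n_neg B)%N,
      (n_pos (diamond A B) : int) = (n_pos A + n_pos B)%:Z - 1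
    & (n_zero (diamond A B) : int)
        = (n * m)%:Z - n%:Z - m%:Z + 1 + (n_zero A)%:Z + (n_zero B)%:Z].
Proof.
move=> n_gt0 m_gt0 _ _ rhoA_gt0 A_ones rhoB_gt0 B_ones.
have rho_gt0 : 0 < m%:R * rhoA + n%:R * rhoB by rewrite addr_gt0 // mulr_gt0 // ltr0n.
have count := nroots_diamond n_gt0 m_gt0 A_ones B_ones.
have scale_eq0 (c x : R) : 0 < c -> (c * x == 0) = (x == 0).
  by move=> c_gt0; rewrite mulf_eq0 gt_eqF.
have cneg := count (fun x => x < 0) (fun c x c_gt0 => pmulr_rlt0 x c_gt0).
have cpos := count (fun x => 0 < x) (fun c x c_gt0 => pmulr_rgt0 x c_gt0).
have czero := count (fun x => x == 0) scale_eq0.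
cbv beta in cneg, cpos, czero.
rewrite ltxx (lt_gtF rhoA_gt0) (lt_gtF rhoB_gt0) (lt_gtF rho_gt0) -!n_negE in cneg.
rewrite ltxx rhoA_gt0 rhoB_gt0 rho_gt0 -!n_posE in cpos.
rewrite eqxx (gt_eqF rhoA_gt0) (gt_eqF rhoB_gt0) (gt_eqF rho_gt0) -!n_zeroE in czero.
by split; lia.
Qed.
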